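(* Let $\lambda\in(0,1]$, $p$ a polynomial of degree $d\ge1$ with nonnegative real roots and largest root $R$. Then the function $\mathcal H(x)=\mathcal G(x)\big(\lambda\mathcal G(x)+\frac{1-\lambda}{x}\big)$, with $\mathcal G(x)=\frac1d\frac{xp'(x^2)}{p(x^2)}$, is a bijection from $(\sqrt R,+\infty)$ onto $(0,+\infty)$.
   Context: $\mathcal G$ is the Cauchy transform $\int\frac{d\mu(t)}{x-t}$ of the uniform measure $\mu$ on the $2d$ roots of $p(x^2)$, and $\mathcal H$ is the $\lambda$-rectangular Cauchy transform of $p(x^2)$. *)

From HB Require Import structures.
From mathcomp Require Import all_boot all_order all_algebra.
From mathcomp Require Import reals.
Set Implicit Arguments. Unset Strict Implicit. Unset Printing Implicit Defensive.
Import Order.TTheory GRing.Theory Num.Theory.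
Local Open Scope ring_scope.

Definition pdeg (R : nzRingType) (p : {poly R}) : nat := (size p).-1.

(* Cauchy transform of the uniform measure on the 2d roots of p(x^2):
   G(x) = (1/d) * x p'(x^2) / p(x^2). *)
Definition cauchyG (R : realType) (p : {poly R}) (x : R) : R :=
  (x * (p^`()).[x ^+ 2]) / ((pdeg p)%:R * p.[x ^+ 2]).

Definition cauchyH (R : realType) (lam : R) (p : {poly R}) (x : R) : R :=
  cauchyG p x * (lam * cauchyG p x + (1 - lam) / x).

From HB Require Import structures.
From mathcomp Require Import all_boot all_order all_algebra.
From mathcomp Require Import reals.
From mathcomp Require Import ring lra.
Set Implicit Arguments. Unset Strict Implicit. Unset Printing Implicit Defensive.
Import Order.TTheory GRing.Theory Num.Theory.
Local Open Scope ring_scope.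

(* For x > sqrt rmax the roots of p(x^2) come in pairs +-sqrt r, so
   G(x) = (1/d) sum_r x / (x^2 - r) is a mean of positive, strictly decreasing
   functions; hence G, and with it H = G (lam G + (1 - lam)/x), is positive and
   strictly decreasing, so H is injective.  The summand of the largest root
   forces H(x) >= lam / (d^2 (x^2 - rmax)), unbounded as x -> sqrt rmax, while
   G(x) <= 2/x for x^2 >= 2 rmax gives H(x) <= 4/x^2.  Surjectivity follows
   from the intermediate value theorem for the polynomial d^2 p(x^2)^2 (y - H(x)),
   which has the sign of y - H(x). *)

Lemma horner_deriv_prod_XsubC (F : fieldType) (s : seq F) (t : F) :
  t \notin s ->
  (\prod_(r <- s) ('X - r%:P))^`().[t] =
  (\prod_(r <- s) ('X - r%:P)).[t] * \sum_(r <- s) (t - r)^-1.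
Proof.
elim: s => [|a s IHs]; first by rewrite !big_nil derivC !hornerC mulr0.
rewrite inE negb_or => /andP[ta ts].
rewrite !big_cons derivM derivXsubC mul1r hornerD !hornerM hornerXsubC IHs //.
have ta0 : t - a != 0 by rewrite subr_eq0.
by field.
Qed.

Lemma cauchyG_prod_XsubC (R : realType) (c x : R) (s : seq R) :
  c != 0 -> x ^+ 2 \notin s ->
  cauchyG (c *: \prod_(r <- s) ('X - r%:P)) x =
  (\sum_(r <- s) x / (x ^+ 2 - r)) / (size s)%:R.
Proof.
move=> c0 xs; rewrite /cauchyG /pdeg size_scale // size_prod_XsubC /=.
have [->|d0] := eqVneq (size s)%:R (0 : R); first by rewrite mul0r !invr0 !mulr0.
have q0 : (\prod_(r <- s) ('X - r%:P)).[x ^+ 2] != 0.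
  by apply: contra xs; rewrite -root_prod_XsubC.
rewrite derivZ !hornerZ horner_deriv_prod_XsubC // -mulr_sumr.
by field; rewrite c0 q0 d0.
Qed.

Lemma cauchyH_numerator (R : realType) (lam y : R) (p : {poly R}) :
  exists Q : {poly R}, forall x, x != 0 -> p.[x ^+ 2] != 0 ->
    Q.[x] = (pdeg p)%:R ^+ 2 * p.[x ^+ 2] ^+ 2 * (y - cauchyH lam p x).
Proof.
set d : R := (pdeg p)%:R.
have [d_eq0|d0] := eqVneq d 0.
  by exists 0 => x _ _; rewrite horner0 d_eq0 expr0n !mul0r.
pose P := p \Po 'X^2; pose P' := p^`() \Po 'X^2.
exists ((y * d ^+ 2) *: P ^+ 2 - lam *: ('X^2 * P' ^+ 2)
        - ((1 - lam) * d) *: (P' * P)).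
move=> x x0 px.
rewrite /P /P' !(hornerD, hornerN, hornerZ, hornerM, horner_exp, horner_comp, hornerX).
by rewrite /cauchyH /cauchyG -/d; field; rewrite x0 px d0.
Qed.

Lemma div_sqr_sub_ltr (F : realFieldType) (r x y : F) :
  0 < x -> x < y -> 0 <= r -> r < x ^+ 2 -> y / (y ^+ 2 - r) < x / (x ^+ 2 - r).
Proof.
move=> x0 xy r0 rx.
have ry : r < y ^+ 2 by rewrite (lt_trans rx) // ltrXn2r // ltW.
rewrite ltr_pdivrMr ?subr_gt0 // mulrAC ltr_pdivlMr ?subr_gt0 //.
rewrite -subr_gt0 (_ : _ - _ = (y - x) * (x * y + r)); last by ring.
by rewrite mulr_gt0 ?subr_gt0 // ltr_wpDr // mulr_gt0 // (lt_trans x0 xy).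
Qed.

Lemma div_sqr_sub_ler (F : realFieldType) (r m x : F) :
  0 < x -> r <= m -> m < x ^+ 2 -> x / (x ^+ 2 - r) <= x / (x ^+ 2 - m).
Proof.
move=> x0 rm mx.
rewrite ler_pM2l // lef_pV2 ?posrE ?subr_gt0 ?(le_lt_trans rm) //.
by rewrite lerB.
Qed.

Lemma lt_sqrtr_sqr (F : rcfType) (r x : F) :
  0 <= r -> Num.sqrt r < x -> r < x ^+ 2.
Proof.
by move=> r0 rx; rewrite -{1}(sqr_sqrtr r0) ltrXn2r ?sqrtr_ge0.
Qed.

Section RealRootedPolynomial.

Variables (R : realType) (lam c rmax : R) (s : seq R).
Hypotheses (lam_gt0 : 0 < lam) (lam_le1 : lam <= 1) (c_neq0 : c != 0).
Hypotheses (s_ge0 : forall r, r \in s -> 0 <= r) (rmax_in_s : rmax \in s).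
Hypothesis rmax_max : forall r, r \in s -> r <= rmax.

Let p := c *: \prod_(r <- s) ('X - r%:P).
Let d : R := (size s)%:R.
Let T (x : R) := \sum_(r <- s) x / (x ^+ 2 - r).

Let rmax_ge0 : 0 <= rmax. Proof. exact: s_ge0. Qed.

Let d_gt0 : 0 < d.
Proof. by rewrite ltr0n; case: s rmax_in_s. Qed.

Let x_gt0 x : Num.sqrt rmax < x -> 0 < x.
Proof. exact/le_lt_trans/sqrtr_ge0. Qed.

Let root_lt_sqr x r : Num.sqrt rmax < x -> r \in s -> r < x ^+ 2.
Proof. by move=> hx /rmax_max /le_lt_trans; apply; apply: lt_sqrtr_sqr. Qed.

Let sqr_notin_s x : Num.sqrt rmax < x -> x ^+ 2 \notin s.
Proof. by move=> hx; apply/negP => /(root_lt_sqr hx); rewrite ltxx. Qed.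

Lemma cauchyG_sumE x : Num.sqrt rmax < x -> cauchyG p x = T x / d.
Proof. by move=> hx; apply: cauchyG_prod_XsubC => //; apply: sqr_notin_s. Qed.

Lemma cauchyG_ge x :
  Num.sqrt rmax < x -> x / (x ^+ 2 - rmax) / d <= cauchyG p x.
Proof.
move=> hx; rewrite cauchyG_sumE // ler_pM2r ?invr_gt0 //.
rewrite /T (big_rem _ rmax_in_s) lerDl big_seq sumr_ge0 // => r /mem_rem rs.
by rewrite divr_ge0 ?subr_ge0 ?(ltW (x_gt0 hx)) ?ltW ?root_lt_sqr.
Qed.

Lemma cauchyG_le x : Num.sqrt rmax < x -> cauchyG p x <= x / (x ^+ 2 - rmax).
Proof.
move=> hx; rewrite cauchyG_sumE // ler_pdivrMr // mulrC.
rewrite /d mulr_natl -iter_addr_0 -(count_predT s) -big_const_seq.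
rewrite /T big_seq [X in _ <= X]big_seq ler_sum // => r rs.
by rewrite div_sqr_sub_ler ?x_gt0 ?rmax_max // lt_sqrtr_sqr.
Qed.

Lemma cauchyG_gt0 x : Num.sqrt rmax < x -> 0 < cauchyG p x.
Proof.
move=> hx; apply: lt_le_trans (cauchyG_ge hx).
by rewrite !divr_gt0 ?(x_gt0 hx) ?subr_gt0 ?(lt_sqrtr_sqr rmax_ge0 hx).
Qed.

Lemma cauchyG_decr x y :
  Num.sqrt rmax < x -> x < y -> cauchyG p y < cauchyG p x.
Proof.
move=> hx xy; have hy := lt_trans hx xy.
rewrite !cauchyG_sumE // ltr_pM2r ?invr_gt0 //.
rewrite /T (big_rem _ rmax_in_s) [X in _ < X](big_rem _ rmax_in_s) /=.
rewrite ltr_leD ?div_sqr_sub_ltr ?x_gt0 ?root_lt_sqr //.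
rewrite big_seq [X in _ <= X]big_seq ler_sum // => r /mem_rem rs.
by rewrite ltW ?div_sqr_sub_ltr ?x_gt0 ?s_ge0 ?root_lt_sqr.
Qed.

Lemma cauchyH_gt0 x : Num.sqrt rmax < x -> 0 < cauchyH lam p x.
Proof.
move=> hx; have G0 := cauchyG_gt0 hx.
rewrite /cauchyH mulr_gt0 // ltr_wpDr ?(mulr_gt0 lam_gt0 G0) //.
by rewrite divr_ge0 ?subr_ge0 ?(ltW (x_gt0 hx)).
Qed.

Lemma cauchyH_decr x y :
  Num.sqrt rmax < x -> x < y -> cauchyH lam p y < cauchyH lam p x.
Proof.
move=> hx xy; have hy := lt_trans hx xy.
have Gy0 := cauchyG_gt0 hy; have Gyx := cauchyG_decr hx xy.
have iyx : y^-1 <= x^-1 by rewrite lef_pV2 ?posrE ?(x_gt0 hx) ?(x_gt0 hy) ?ltW.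
have lam1 : 0 <= 1 - lam by rewrite subr_ge0.
rewrite /cauchyH ltr_pM ?ltW ?ltr_leD ?ler_wpM2l ?ltr_pM2l //.
by rewrite ltr_wpDr ?(mulr_gt0 lam_gt0 Gy0) ?divr_ge0 ?(ltW (x_gt0 hy)).
Qed.

Lemma cauchyH_inj x y : Num.sqrt rmax < x -> Num.sqrt rmax < y ->
  cauchyH lam p x = cauchyH lam p y -> x = y.
Proof.
move=> hx hy Hxy; case: (ltgtP x y) => // [xy|yx].
- by have := cauchyH_decr hx xy; rewrite Hxy ltxx.
- by have := cauchyH_decr hy yx; rewrite Hxy ltxx.
Qed.

Lemma cauchyH_ge x :
  Num.sqrt rmax < x -> lam / (d ^+ 2 * (x ^+ 2 - rmax)) <= cauchyH lam p x.
Proof.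
move=> hx; have x0 := x_gt0 hx.
have e0 : 0 < x ^+ 2 - rmax by rewrite subr_gt0 lt_sqrtr_sqr.
have G0 := cauchyG_gt0 hx; have Gge := cauchyG_ge hx.
set e := x ^+ 2 - rmax in e0 Gge *; set G := cauchyG p x in G0 Gge *.
have xe : e <= x ^+ 2 by rewrite /e gerBl.
have dGe : x <= d * G * e by rewrite -ler_pdivrMr // -ler_pdivrMl // mulrC.
have dGe2 : 1 <= G ^+ 2 * (d ^+ 2 * e).
  rewrite -(ler_pM2l e0) mulr1 (le_trans xe) //.
  rewrite (_ : e * _ = (d * G * e) ^+ 2); last by ring.
  by rewrite !expr2; exact: (ler_pM (ltW x0) (ltW x0) dGe dGe).
have lamG : lam / (d ^+ 2 * e) <= lam * G ^+ 2.
  by rewrite ler_pdivrMr ?mulr_gt0 ?exprn_gt0 // -mulrA ler_peMr // ltW.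
apply: le_trans lamG _.
rewrite /cauchyH -/G mulrDr [G * (lam * G)]mulrCA -expr2 lerDl.
by rewrite mulr_ge0 ?(ltW G0) // divr_ge0 ?subr_ge0 // ltW.
Qed.

Lemma cauchyH_le x :
  Num.sqrt rmax < x -> 2 * rmax <= x ^+ 2 -> cauchyH lam p x <= 4 / x ^+ 2.
Proof.
move=> hx x2; have x0 := x_gt0 hx.
have e0 : 0 < x ^+ 2 - rmax by rewrite subr_gt0 lt_sqrtr_sqr.
rewrite /cauchyH; move: (cauchyG_gt0 hx) (cauchyG_le hx).
move: (cauchyG p x) => G G0 Gle.
have Gx : G * x <= 2.
  have : G * x <= x ^+ 2 / (x ^+ 2 - rmax) by rewrite expr2 mulrAC ler_pM2r.
  by move/le_trans; apply; rewrite ler_pdivrMr //; lra.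
have Gx0 : 0 < G * x by rewrite mulr_gt0.
rewrite ler_pdivlMr ?exprn_gt0 //.
rewrite (_ : _ * x ^+ 2 = G * x * (lam * (G * x) + (1 - lam))); last first.
  by field; rewrite lt0r_neq0.
rewrite (_ : 4 = 2 * 2); last by rewrite -natrM.
apply: ler_pM => //; first exact: ltW.
- by rewrite addr_ge0 ?mulr_ge0 ?subr_ge0 // ltW.
- apply: le_trans (lerD (ler_wpM2l (ltW lam_gt0) Gx) (lexx _)) _.
  by move: lam_le1; lra.
Qed.

Lemma cauchyH_unbounded y :
  0 < y -> exists2 a, Num.sqrt rmax < a & y < cauchyH lam p a.
Proof.
move=> y0; pose e := lam / (2 * y * d ^+ 2).
have e0 : 0 < e by rewrite divr_gt0 ?mulr_gt0 ?exprn_gt0.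
have re0 : 0 < rmax + e by rewrite ltr_wpDl.
have ha : Num.sqrt rmax < Num.sqrt (rmax + e) by rewrite ltr_sqrt // ltrDl.
exists (Num.sqrt (rmax + e)) => //; apply: lt_le_trans (cauchyH_ge ha).
have -> : Num.sqrt (rmax + e) ^+ 2 - rmax = e.
  by rewrite sqr_sqrtr ?ltW // addrC addKr.
have -> : lam / (d ^+ 2 * e) = 2 * y.
  by rewrite /e; field; rewrite !lt0r_neq0 ?exprn_gt0.
by rewrite ltr_pMl // ltr1n.
Qed.

Lemma cauchyH_vanishing y :
  0 < y -> exists2 b, Num.sqrt rmax < b & cauchyH lam p b < y.
Proof.
move=> y0; have y4 : 0 < 4 / y by rewrite divr_gt0.
pose b2 := 2 * rmax + 4 / y + 1.
have [b2_gt b2_2rmax b2_4y] : [/\ rmax < b2, 2 * rmax <= b2 & 4 / y < b2].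
  by move: rmax_ge0; rewrite /b2; split; lra.
have b2_gt0 : 0 < b2 := le_lt_trans rmax_ge0 b2_gt.
have hb : Num.sqrt rmax < Num.sqrt b2 by rewrite ltr_sqrt.
have b2E : Num.sqrt b2 ^+ 2 = b2 by rewrite sqr_sqrtr ?ltW.
have := cauchyH_le hb; rewrite b2E => /(_ b2_2rmax) H_le.
exists (Num.sqrt b2) => //; apply: le_lt_trans H_le _.
by rewrite ltr_pdivrMr // mulrC -ltr_pdivrMr.
Qed.

Lemma cauchyH_onto y :
  0 < y -> exists x, Num.sqrt rmax < x /\ cauchyH lam p x = y.
Proof.
move=> y0.
have [a ha Ha] := cauchyH_unbounded y0; have [b hb Hb] := cauchyH_vanishing y0.
have ab : a <= b.
  rewrite leNgt; apply/negP => /(cauchyH_decr hb).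
  by move/(lt_trans (lt_trans Hb Ha)); rewrite ltxx.
have p_neq0 x : Num.sqrt rmax < x -> p.[x ^+ 2] != 0.
  move=> hx; rewrite hornerZ mulf_neq0 //.
  by apply: contra (sqr_notin_s hx); rewrite -root_prod_XsubC.
have [Q QE] := cauchyH_numerator lam y p.
have pdegE : (pdeg p)%:R = d by rewrite /pdeg size_scale // size_prod_XsubC.
have Q_sign x : Num.sqrt rmax < x ->
    Q.[x] = d ^+ 2 * p.[x ^+ 2] ^+ 2 * (y - cauchyH lam p x).
  by move=> hx; rewrite QE ?pdegE ?(lt0r_neq0 (x_gt0 hx)) ?p_neq0.
have w0 x : 0 <= d ^+ 2 * p.[x ^+ 2] ^+ 2.
  by rewrite mulr_ge0 ?sqr_ge0 // exprn_ge0 // ltW.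
have Qab : Q.[a] <= 0 <= Q.[b].
  rewrite !Q_sign //; apply/andP; split.
  - by apply: mulr_ge0_le0 (w0 a) _; rewrite subr_le0 ltW.
  - by apply: mulr_ge0 (w0 b) _; rewrite subr_ge0 ltW.
have [z /andP[az zb] /rootP] := poly_ivt ab Qab.
have hz := lt_le_trans ha az.
have w_neq0 : d ^+ 2 * p.[z ^+ 2] ^+ 2 != 0.
  by rewrite mulf_neq0 ?expf_neq0 ?(lt0r_neq0 d_gt0) ?p_neq0.
rewrite Q_sign // => /eqP; rewrite mulf_eq0 (negbTE w_neq0) subr_eq0 eq_sym /=.
by move=> /eqP Hz; exists z.
Qed.

End RealRootedPolynomial.

Theorem mainTheorem16 (R : realType) (lam : R) (p : {poly R}) (c : R)
    (s : seq R) (rmax : R) :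
  0 < lam -> lam <= 1 ->
  (1 <= pdeg p)%N ->
  (* p has only real, nonnegative roots: p = c * prod_(r in s) (X - r) *)
  p = c *: \prod_(r <- s) ('X - r%:P) ->
  (forall r, r \in s -> 0 <= r) ->
  (* rmax is the largest root of p *)
  root p rmax -> (forall r, root p r -> r <= rmax) ->
  (* H is a bijection from (sqrt rmax, +oo) onto (0, +oo) *)
  [/\ (forall x, Num.sqrt rmax < x -> 0 < cauchyH lam p x),
      (forall x y, Num.sqrt rmax < x -> Num.sqrt rmax < y ->
          cauchyH lam p x = cauchyH lam p y -> x = y) &
      (forall y, 0 < y -> exists x, Num.sqrt rmax < x /\ cauchyH lam p x = y)].
Proof.
move=> l0 l1 dp pE s0 rmax_root rmax_max.
have c0 : c != 0 by apply: contraTneq dp => c0; rewrite pE c0 scale0r /pdeg size_poly0.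
have rootE r : root p r = (r \in s) by rewrite pE rootZ // root_prod_XsubC.
rewrite rootE in rmax_root; have {}rmax_max r : r \in s -> r <= rmax.
  by rewrite -rootE; apply: rmax_max.
rewrite pE; split.
- exact: cauchyH_gt0.
- exact: cauchyH_inj.
- exact: cauchyH_onto.
Qed.
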